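(* For every integer $k\ge 1$ there is a constant $c_k>0$, depending only on $k$, such that the following holds. Let $D$ be a finite set with $|D|=2^L$ for some integer $L\ge 0$, let $n\ge 0$ and $T\ge 1$ be integers, and let $f:D^{n+1}\to\mathbb{R}$ be of the form $$f(x_0,x_1,\dots,x_n)=\sum_{t=1}^T f_t(x_0,x_1,\dots,x_n),$$ where each $f_t:D^{n+1}\to\mathbb{R}$ depends on at most $k$ of the variables $x_0,\dots,x_n$. Let $X_0,X_1,\dots,X_n$ be independent random variables, each uniformly distributed on $D$. Then $$\mathbb{E}\Big[\max_{x\in D} f(x,X_1,\dots,X_n)-f(X_0,X_1,\dots,X_n)\Big]\;\ge\; c_k\,T^{-1}|D|^{-k}\max_{x^+,x^-,x_1,\dots,x_n\in D}\big(f(x^+,x_1,\dots,x_n)-f(x^-,x_1,\dots,x_n)\big).$$ *)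

From mathcomp Require Import all_boot all_order all_algebra.
From mathcomp Require Import reals.
Set Implicit Arguments. Unset Strict Implicit. Unset Printing Implicit Defensive.
Import Order.TTheory GRing.Theory Num.Theory.
Local Open Scope ring_scope.

(* maximum of a real-valued function on a finite type (0 if the type is empty) *)
Definition fmax (R : realType) (A : finType) (g : A -> R) : R :=
  match [pick a : A] with
  | Some a0 => \big[Num.max/g a0]_(a : A) g a
  | None => 0
  end.

Definition setx0 (D : finType) (n : nat) (X : {ffun 'I_n.+1 -> D}) (x : D)
  : {ffun 'I_n.+1 -> D} :=
  [ffun i => if i == ord0 then x else X i].

Definition depends_on_at_most (R : realType) (D : finType) (n k : nat)
  (g : {ffun 'I_n.+1 -> D} -> R) : Prop :=
  exists S : {set 'I_n.+1}, (#|S| <= k)%N /\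
    forall x y : {ffun 'I_n.+1 -> D}, (forall i, i \in S -> x i = y i) -> g x = g y.

(* E[ max_x f(x,X_1..X_n) - f(X_0,X_1..X_n) ] for X_i iid uniform on D *)
Definition expected_gap (R : realType) (D : finType) (n : nat)
  (f : {ffun 'I_n.+1 -> D} -> R) : R :=
  (#|D|%:R ^+ n.+1)^-1 *
    \sum_(X : {ffun 'I_n.+1 -> D}) (fmax (fun x => f (setx0 X x)) - f X).

(* max over x^+, x^-, x_1..x_n of f(x^+,x_1..x_n) - f(x^-,x_1..x_n)
   (coordinate 0 of X is ignored) *)
Definition max_range (R : realType) (D : finType) (n : nat)
  (f : {ffun 'I_n.+1 -> D} -> R) : R :=
  fmax (fun p : D * D * {ffun 'I_n.+1 -> D} =>
          f (setx0 p.2 p.1.1) - f (setx0 p.2 p.1.2)).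

(* Fix a maximiser (x+, x-, y) of the range and write
   f(x+, X) - f(x-, X) = sum_t g_t(X), where g_t, a finite difference of f_t in
   the variable x_0, depends on at most k - 1 of the coordinates X_1, ..., X_n.
   For such a sum G of juntas, Mobius inversion of the conditional means
   U |-> E[G | X_U = y_U] writes G(y) as a sum of at most T 2^(k-1)
   coefficients, one for each subset of a support of some g_t, and each
   coefficient is at most 2^(k-1) |D|^(k-1) E|G|.  Finally
   E|G| <= |D| E[gap], because |G(X)| is bounded by the gap at X with x_0
   reset to x- or x+.  So c_k = 4^(1-k) works; of |D| = 2^L only |D| > 0
   is used. *)

From mathcomp Require Import all_boot all_order all_algebra.
From mathcomp Require Import reals ring unstable.
Import Order.TTheory GRing.Theory Num.Theory.
Local Open Scope ring_scope.
Set Implicit Arguments. Unset Strict Implicit.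

Section Coordinates.
Variables (I D : finType).
Implicit Types (X Y Z : {ffun I -> D}) (U C : {set I}).

Definition setc Z (i : I) (a : D) : {ffun I -> D} :=
  [ffun j => if j == i then a else Z j].

Definition mix U y Z : {ffun I -> D} := [ffun j => if j \in U then y j else Z j].

Definition depends_only (R : Type) C (g : {ffun I -> D} -> R) : Prop :=
  forall X Y, (forall i, i \in C -> X i = Y i) -> g X = g Y.

Lemma setc_id Z i : setc Z i (Z i) = Z.
Proof. by apply/ffunP => j; rewrite !ffunE; case: eqVneq => // ->. Qed.

Lemma setc_setc Z i a b : setc (setc Z i b) i a = setc Z i a.
Proof. by apply/ffunP => j; rewrite !ffunE; case: eqVneq. Qed.

Lemma mix0 y Z : mix set0 y Z = Z.
Proof. by apply/ffunP => j; rewrite !ffunE inE. Qed.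

Lemma mix_setD1 U i y Z : i \in U -> mix U y Z = setc (mix (U :\ i) y Z) i (y i).
Proof.
move=> iU; apply/ffunP => j; rewrite !ffunE !inE.
by case: eqVneq => [->|]; rewrite ?iU.
Qed.

Lemma depends_only_diff_setc (R : zmodType) C (g : {ffun I -> D} -> R) i a b :
  depends_only C g ->
  exists2 C' : {set I}, (#|C'| <= #|C|.-1)%N &
    depends_only C' (fun X => g (setc X i a) - g (setc X i b)).
Proof.
move=> gC; have [iC | iNC] := boolP (i \in C).
  exists (C :\ i); first by rewrite (cardsD1 i C) iC.
  move=> X Y XY; congr (_ - _); apply: gC => j jC; rewrite !ffunE;
    by case: eqVneq => // ji; apply: XY; rewrite !inE ji.
exists (set0 : {set I}); first by rewrite cards0.
have ab Z : g (setc Z i a) = g (setc Z i b).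
  apply: gC => j jC; rewrite !ffunE; case: eqVneq => // ji.
  by rewrite -ji jC in iNC.
by move=> X Y _; rewrite !ab !subrr.
Qed.

End Coordinates.

Section Averages.
Variables (R : numFieldType) (I D : finType).
Implicit Types (X y Z : {ffun I -> D}) (U C : {set I}).
Implicit Types (g h : {ffun I -> D} -> R).

Definition avg g : R := (#|D|%:R ^+ #|I|)^-1 * \sum_X g X.

(* the conditional expectation of [g] given that the coordinates in [U]
   agree with those of [y] *)
Definition cond_mean U g y : R := avg (fun Z => g (mix U y Z)).

Lemma avg_ge0 g : (forall X, 0 <= g X) -> 0 <= avg g.
Proof. by move=> g0; rewrite mulr_ge0 ?invr_ge0 ?exprn_ge0 ?ler0n ?sumr_ge0. Qed.

Lemma sum_setc i h :
  \sum_(b : D) \sum_Z h (setc Z i b) = #|D|%:R * \sum_Z h Z.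
Proof.
rewrite pair_big /=.
pose phi (p : D * {ffun I -> D}) := (p.2 i, setc p.2 i p.1).
have phiK : involutive phi.
  by move=> [b Z]; rewrite /phi /= setc_setc setc_id ffunE eqxx.
rewrite (reindex_inj (inv_inj phiK)) /=.
under eq_bigr => p _ do rewrite setc_setc setc_id.
rewrite -(pair_big predT predT (fun (b : D) Z => h Z)) /=.
by rewrite sumr_const cardT -cardE mulr_natl.
Qed.

Lemma sum_setc_le i a h : (forall X, 0 <= h X) ->
  \sum_Z h (setc Z i a) <= #|D|%:R * \sum_Z h Z.
Proof.
move=> h0; rewrite -(sum_setc i) (bigD1 a) //= lerDl.
by apply: sumr_ge0 => b _; apply: sumr_ge0.
Qed.

Lemma sum_mix_le U y h : (forall X, 0 <= h X) ->
  \sum_Z h (mix U y Z) <= #|D|%:R ^+ #|U| * \sum_Z h Z.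
Proof.
move: {2}#|U| (erefl #|U|) => m; elim: m U h => [|m IH] U h Um h0.
  by rewrite (cards0_eq Um) cards0 expr0 mul1r; under eq_bigr do rewrite mix0.
have [i iU] : exists i, i \in U by apply/set0Pn; rewrite -card_gt0 Um.
under eq_bigr do rewrite (mix_setD1 _ _ iU).
have Ui : #|U :\ i| = m by move: Um; rewrite (cardsD1 i U) iU => -[].
apply: le_trans (IH (U :\ i) (fun W => h (setc W i (y i))) Ui (fun W => h0 _)) _.
rewrite Um Ui exprSr -mulrA ler_wpM2l ?exprn_ge0 ?ler0n //.
exact: sum_setc_le.
Qed.

Lemma norm_cond_mean_le U g y :
  `|cond_mean U g y| <= #|D|%:R ^+ #|U| * avg (fun X => `|g X|).
Proof.
rewrite /cond_mean /avg normrM normfV normrX normr_nat mulrCA.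
rewrite ler_wpM2l ?invr_ge0 ?exprn_ge0 ?ler0n //.
apply: le_trans (ler_norm_sum _ _ _) _.
by apply: (@sum_mix_le U y (fun Z => `|g Z|)) => Z.
Qed.

Lemma cond_mean_setI C U g y :
  depends_only C g -> cond_mean U g y = cond_mean (U :&: C) g y.
Proof.
move=> gC; rewrite /cond_mean /avg; congr (_ * _); apply: eq_bigr => Z _.
by apply: gC => i iC; rewrite !ffunE inE iC andbT.
Qed.

Lemma cond_mean_id C g y :
  (0 < #|D|)%N -> depends_only C g -> cond_mean C g y = g y.
Proof.
move=> D0 gC; rewrite /cond_mean /avg.
rewrite (eq_bigr (fun _ => g y)) => [|Z _]; last first.
  by apply: gC => i iC; rewrite ffunE iC.
rewrite sumr_const cardT -cardE card_ffun -[g y *+ _]mulr_natl natrX mulKf //.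
by rewrite expf_neq0 // pnatr_eq0 -lt0n.
Qed.

Lemma cond_mean_sum (J : Type) (r : seq J) (P : pred J) U
    (g : J -> {ffun I -> D} -> R) y :
  cond_mean U (fun X => \sum_(j <- r | P j) g j X) y
  = \sum_(j <- r | P j) cond_mean U (g j) y.
Proof. by rewrite /cond_mean /avg exchange_big mulr_sumr. Qed.

End Averages.

Section Mobius.
Variables (R : numDomainType) (I : finType).
Implicit Types (U S W C : {set I}) (psi : {set I} -> R).

Definition toggle (i : I) W : {set I} := if i \in W then W :\ i else i |: W.

Lemma in_toggle i j W :
  (j \in toggle i W) = if j == i then i \notin W else j \in W.
Proof.
rewrite /toggle; case: (boolP (i \in W)) => iW; case: (eqVneq j i) => [->|ji];
  by rewrite ?inE ?eqxx ?iW ?(negbTE ji).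
Qed.

Lemma toggleK i : involutive (toggle i).
Proof.
move=> W; apply/setP => j; rewrite !in_toggle eqxx.
by case: eqVneq => [->|_]; rewrite ?negbK.
Qed.

Lemma sign_toggle i W : (-1) ^+ #|toggle i W| = - (-1) ^+ #|W| :> R.
Proof.
rewrite /toggle; case: ifP => iW; last by rewrite cardsU1 iW exprS mulN1r.
by rewrite [in RHS](cardsD1 i W) iW exprS mulN1r opprK.
Qed.

Lemma subset_toggle i S W : i \notin S -> (S \subset toggle i W) = (S \subset W).
Proof.
move=> iS; apply/subsetP/subsetP => SW j jS; have := SW j jS; rewrite ?in_toggle;
  by case: eqVneq => [ji|] //; rewrite -ji jS in iS.
Qed.

Lemma toggle_subset i S W : i \in S -> (toggle i W \subset S) = (W \subset S).
Proof.
move=> iS; apply/subsetP/subsetP => WS j.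
  move=> jW; case: (eqVneq j i) => [->//|ji]; apply: WS.
  by rewrite in_toggle (negbTE ji).
by rewrite in_toggle; case: eqVneq => [->//|_]; apply: WS.
Qed.

Lemma sum_toggle_eq0 i (P : pred {set I}) (h : {set I} -> R) :
  (forall W, P (toggle i W) = P W) ->
  (forall W, P W -> h (toggle i W) = - h W) ->
  \sum_(W : {set I} | P W) h W = 0.
Proof.
move=> Pi hi; set s := \sum_(W : {set I} | P W) h W.
have s_opp : s = - s.
  rewrite /s {1}(reindex_inj (inv_inj (toggleK i))) /= -sumrN.
  by apply: eq_big => [W | W PW]; rewrite ?Pi // hi // -Pi.
have : s *+ 2 == 0 by rewrite mulr2n {2}s_opp subrr.
by rewrite mulrn_eq0 /= => /eqP.
Qed.

Definition mobius psi S : R :=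
  \sum_(U : {set I} | U \subset S) (-1) ^+ (#|S| + #|U|) * psi U.

Lemma eq_mobius psi phi S :
  (forall U, psi U = phi U) -> mobius psi S = mobius phi S.
Proof. by move=> E; apply: eq_bigr => U _; rewrite E. Qed.

Lemma mobius_sum (J : Type) (r : seq J) (P : pred J)
    (psi : J -> {set I} -> R) S :
  mobius (fun U => \sum_(j <- r | P j) psi j U) S
  = \sum_(j <- r | P j) mobius (psi j) S.
Proof.
by rewrite /mobius exchange_big; apply: eq_bigr => U _; rewrite mulr_sumr.
Qed.

Lemma mobius_eq0 psi C S :
  (forall U, psi U = psi (U :&: C)) -> ~~ (S \subset C) -> mobius psi S = 0.
Proof.
move=> psiC /subsetPn [i iS iNC]; rewrite /mobius.
apply: (sum_toggle_eq0 (i := i)) => [W | W _]; first by rewrite toggle_subset.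
rewrite exprD sign_toggle mulrN -exprD mulNr psiC [in RHS]psiC.
congr (- (_ * psi _)).
apply/setP => j; rewrite !inE in_toggle.
by case: eqVneq => // ->; rewrite (negbTE iNC) !andbF.
Qed.

Lemma sum_mobius psi C : \sum_(S : {set I} | S \subset C) mobius psi S = psi C.
Proof.
rewrite /mobius (exchange_big_dep (fun U => U \subset C)) /=; last first.
  by move=> S U SC US; exact: subset_trans US SC.
rewrite (bigD1 C) //= [X in _ + X]big1 ?addr0.
  rewrite (big_pred1 C) => [|S]; last by rewrite /= eqEsubset.
  by rewrite -signr_odd oddD addbb expr0 mul1r.
move=> U /andP [UC UneC].
have /properP [_ [i iC iNU]] : U \proper C by rewrite properEneq UneC.
rewrite -big_distrl /= (sum_toggle_eq0 (i := i)) ?mul0r // => [W | W _].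
  by rewrite toggle_subset // subset_toggle.
by rewrite addnC exprD sign_toggle mulrN -exprD addnC.
Qed.

Lemma norm_mobius_le psi S b :
  (forall U, U \subset S -> `|psi U| <= b) ->
  `|mobius psi S| <= (2 ^ #|S|)%:R * b.
Proof.
move=> psib; apply: le_trans (ler_norm_sum _ _ _) _.
apply: (@le_trans _ _ (\sum_(U : {set I} | U \subset S) b)).
  by apply: ler_sum => U US; rewrite normrM normrX normrN1 expr1n mul1r psib.
rewrite (eq_bigl (fun U => U \in powerset S)) => [|U]; last by rewrite inE.
by rewrite sumr_const card_powerset mulr_natl.
Qed.

End Mobius.

Section Juntas.
Variables (R : numFieldType) (I D : finType) (T : nat).
Variables (C : 'I_T -> {set I}) (g : 'I_T -> {ffun I -> D} -> R).
Hypothesis D0 : (0 < #|D|)%N.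
Hypothesis gC : forall t, depends_only (C t) (g t).
Arguments gC : clear implicits.

Lemma junta_sum_mobius y :
  \sum_t g t y = \sum_(S in \bigcup_t powerset (C t))
                   mobius (fun U => cond_mean U (fun X => \sum_t g t X) y) S.
Proof.
have mobius_cond_mean_sum S :
    mobius (fun U => cond_mean U (fun X => \sum_t g t X) y) S
    = \sum_t mobius (fun U => cond_mean U (g t) y) S.
  by rewrite -mobius_sum; apply: eq_mobius => U; rewrite cond_mean_sum.
under [RHS]eq_bigr do rewrite mobius_cond_mean_sum.
rewrite exchange_big; apply: eq_bigr => t _.
rewrite (bigID (fun S : {set I} => S \subset C t)) /= [X in _ + X]big1 ?addr0.
  rewrite -(cond_mean_id y D0 (gC t)).
  rewrite -(sum_mobius (fun U => cond_mean U (g t) y)); apply: eq_bigl => S.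
  case SC: (S \subset C t); rewrite ?andbT ?andbF //.
  by apply/esym/bigcupP; exists t; rewrite ?inE.
by move=> S /andP [_]; apply: mobius_eq0 => U; apply: cond_mean_setI (gC t).
Qed.

Lemma junta_sum_le (m : nat) y : (forall t, #|C t| <= m)%N ->
  `|\sum_t g t y| <=
    (T * 4 ^ m)%:R * (#|D|%:R ^+ m * avg (fun X => `|\sum_t g t X|)).
Proof.
move=> Cm; set A := avg _; set F := \bigcup_t powerset (C t).
have A0 : 0 <= A by apply: avg_ge0.
have N1 : 1 <= #|D|%:R :> R by rewrite ler1n.
have NA0 : 0 <= #|D|%:R ^+ m * A by rewrite mulr_ge0 ?exprn_ge0 ?ler0n.
have Fm S : S \in F -> (#|S| <= m)%N.
  case/bigcupP => t _; rewrite inE => SC.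
  exact: leq_trans (subset_leq_card SC) (Cm t).
have cardF : (#|F| <= T * 2 ^ m)%N.
  apply: leq_trans (card_big_setU _ _ _) _.
  rewrite -[T in (_ <= T * _)%N]card_ord -sum_nat_const; apply: leq_sum => t _.
  by rewrite card_powerset leq_pexp2l.
have mobius_le S : S \in F ->
    `|mobius (fun U => cond_mean U (fun X => \sum_t g t X) y) S|
      <= (2 ^ m)%:R * (#|D|%:R ^+ m * A).
  move=> SF; apply: le_trans (norm_mobius_le (b := #|D|%:R ^+ m * A) _) _.
    move=> U US; apply: le_trans (norm_cond_mean_le _ _ _) _.
    rewrite ler_wpM2r //.
    by rewrite ler_weXn2l // (leq_trans (subset_leq_card US)) ?Fm.
  by rewrite ler_wpM2r // ler_nat leq_pexp2l ?Fm.
rewrite junta_sum_mobius; apply: le_trans (ler_norm_sum _ _ _) _.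
apply: le_trans (ler_sum _ mobius_le) _.
rewrite sumr_const -[_ *+ #|F|]mulr_natl (mulrA #|F|%:R) ler_wpM2r //.
rewrite -natrM ler_nat.
by rewrite (_ : 4 = 2 * 2)%N // expnMn mulnA leq_mul2r cardF orbT.
Qed.

End Juntas.

Section Gaps.
Variables (R : realType) (I D : finType).
Implicit Types (X : {ffun I -> D}) (f : {ffun I -> D} -> R).

Lemma fmax_ge (A : finType) (h : A -> R) a : h a <= fmax h.
Proof.
rewrite /fmax; case: pickP => [a0 _|]; last by move/(_ a).
have : a \in index_enum A by rewrite mem_index_enum.
elim: (index_enum A) => [//|b s IH]; rewrite inE big_cons => /orP [/eqP->|/IH ha].
  by rewrite le_max lexx.
by rewrite le_max ha orbT.
Qed.

Lemma eq_fmax (A : finType) (g h : A -> R) :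
  (forall a, g a = h a) -> fmax g = fmax h.
Proof.
by move=> gh; rewrite /fmax; case: pickP => // a0 _; rewrite gh; apply: eq_bigr.
Qed.

Lemma fmax_argmax (A : finType) (h : A -> R) (a : A) : exists b, fmax h = h b.
Proof.
rewrite /fmax; case: pickP => [a0 _|]; last by move/(_ a).
elim: (index_enum A) => [|c s [b IH]]; first by exists a0; rewrite big_nil.
by rewrite big_cons IH; case: (leP (h c) (h b)); [exists b | exists c].
Qed.

Definition gap f i X : R := fmax (fun x => f (setc X i x)) - f X.

Lemma gap_ge0 f i X : 0 <= gap f i X.
Proof.
rewrite subr_ge0; have := fmax_ge (fun x => f (setc X i x)) (X i).
by rewrite setc_id.
Qed.

Lemma norm_diff_setc_le_gap f i a b X :
  `|f (setc X i a) - f (setc X i b)| <= \sum_c gap f i (setc X i c).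
Proof.
have gap_setc c :
    gap f i (setc X i c) = fmax (fun x => f (setc X i x)) - f (setc X i c).
  by rewrite /gap; under eq_fmax do rewrite setc_setc.
have gap_le c : gap f i (setc X i c) <= \sum_c gap f i (setc X i c).
  by rewrite (bigD1 c) //= lerDl sumr_ge0 // => ? _; apply: gap_ge0.
have [d0|d0] := lerP 0 (f (setc X i a) - f (setc X i b)).
  apply: le_trans (gap_le b); rewrite ger0_norm // gap_setc lerD2r.
  exact: (fmax_ge (fun x => f (setc X i x))).
apply: le_trans (gap_le a); rewrite ltr0_norm // opprB gap_setc lerD2r.
exact: (fmax_ge (fun x => f (setc X i x))).
Qed.

Lemma avg_norm_diff_setc_le f i a b :
  avg (fun X => `|f (setc X i a) - f (setc X i b)|) <= #|D|%:R * avg (gap f i).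
Proof.
rewrite /avg mulrCA ler_wpM2l ?invr_ge0 ?exprn_ge0 ?ler0n //.
rewrite -(sum_setc i) exchange_big.
by apply: ler_sum => X _; apply: norm_diff_setc_le_gap.
Qed.

End Gaps.

Lemma expected_gapE (R : realType) (D : finType) n
    (f : {ffun 'I_n.+1 -> D} -> R) :
  expected_gap f = avg (gap f ord0).
Proof. by rewrite /expected_gap /avg card_ord. Qed.

Lemma sum_junta_diff_le_gap (R : realType) (I D : finType) (T m : nat)
    (C : 'I_T -> {set I}) (fs : 'I_T -> {ffun I -> D} -> R) i a b y :
  (0 < #|D|)%N -> (forall t, #|C t| <= m.+1)%N ->
  (forall t, depends_only (C t) (fs t)) ->
  \sum_t fs t (setc y i a) - \sum_t fs t (setc y i b)
    <= (T * 4 ^ m)%:R * #|D|%:R ^+ m.+1 * avg (gap (fun X => \sum_t fs t X) i).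
Proof.
move=> D0 Cm fsC; pose g t X := fs t (setc X i a) - fs t (setc X i b).
have /fin_all_exists [C' gC'] :
    forall t, exists C' : {set I}, (#|C'| <= m)%N /\ depends_only C' (g t).
  move=> t; have [C' C'C gC'] := depends_only_diff_setc i a b (fsC t).
  exists C'; split=> //.
  by apply: leq_trans C'C _; rewrite -subn1 leq_subLR add1n.
rewrite -sumrB; apply: le_trans (ler_norm _) _.
apply: le_trans (junta_sum_le D0 (fun t => (gC' t).2) y (fun t => (gC' t).1)) _.
rewrite exprSr -!mulrA !ler_wpM2l ?exprn_ge0 ?ler0n //.
rewrite /avg; under eq_bigr do rewrite sumrB.
exact: avg_norm_diff_setc_le.
Qed.

Theorem theorem2 (R : realType) (k : nat) (hk : (1 <= k)%N) :
  exists c : R, 0 < c /\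
    forall (D : finType) (L n T : nat), #|D| = (2 ^ L)%N -> (1 <= T)%N ->
    forall fs : 'I_T -> {ffun 'I_n.+1 -> D} -> R,
      (forall t, depends_on_at_most k (fs t)) ->
      let f := fun x => \sum_(t < T) fs t x in
      c / T%:R / (#|D|%:R ^+ k) * max_range f <= expected_gap f.
Proof.
exists (4 ^ k.-1)%:R^-1; split; first by rewrite invr_gt0 ltr0n expn_gt0.
move=> D L n T DL T1 fs fs_dep /=.
have D0 : (0 < #|D|)%N by rewrite DL expn_gt0.
have /card_gt0P [d _] := D0.
have /fin_all_exists [C fsC] : forall t, exists C : {set 'I_n.+1},
    (#|C| <= k.-1.+1)%N /\ depends_only C (fs t).
  by rewrite prednK.
rewrite /max_range; have [[[xp xm] y] ->] := fmax_argmax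
  (fun p : D * D * {ffun 'I_n.+1 -> D} =>
     \sum_t fs t (setx0 p.2 p.1.1) - \sum_t fs t (setx0 p.2 p.1.2))
  (d, d, [ffun=> d]).
have := sum_junta_diff_le_gap ord0 xp xm y D0
  (fun t => (fsC t).1) (fun t => (fsC t).2).
rewrite -expected_gapE prednK // => range_le.
have c_ge0 : 0 <= (4 ^ k.-1)%:R^-1 / T%:R / #|D|%:R ^+ k :> R.
  by rewrite !mulr_ge0 ?invr_ge0 ?exprn_ge0 ?ler0n.
apply: le_trans (ler_wpM2l c_ge0 range_le) _.
set E := expected_gap _; rewrite [X in X <= _](_ : _ = E) //; field.
by rewrite expf_neq0 !pnatr_eq0 -!lt0n //= T1 expn_gt0.
Qed.
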